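(* Let $X\subseteq\{0,1\}^n$ be a nonempty set, let $U\subseteq\mathbb{R}^{n+1}$ be a nonempty compact set, and define $f(x):=\max_{(c_0,c)\in U}\, c^\top x+c_0$ for $x\in\mathbb{R}^n$. Consider an iteration $k$ of Algorithm SD-DROP (described in the context) in which the algorithm does not terminate. Let $L$ be an affine subspace of $\mathbb{R}^n$ containing $x^k$ such that (i) the restriction $f|_L$ is differentiable at $x^k$, (ii) $\dim(L\cap\operatorname{aff}(V^{k+1}))\ge 1$, and (iii) $c^k$ is not orthogonal to $L\cap\operatorname{aff}(V^{k+1})$. Then $f(x^{k+1})<f(x^k)$.
   Context: For a convex function $f$, $\partial f(x)$ denotes its subdifferential at $x$. For a convex set $C$ and $x\in C$, $\mathcal{N}_C(x)=\{d\in\mathbb{R}^n: d^\top(y-x)\le 0\ \forall y\in C\}$ is the normal cone of $C$ at $x$; $\operatorname{aff}$ denotes affine hull. ''$c^k$ not orthogonal to $L\cap\operatorname{aff}(V^{k+1})$'' means $c^k$ is not orthogonal to the linear subspace parallel to this affine set. Algorithm SD-DROP: pick any $\hat x^0\in X$ and set $V^1=\{\hat x^0\}$. For $k=1,2,\dots$: compute $\alpha^k\in\mathbb{R}^{V^k}_+$ with $\sum_{v\in V^k}\alpha^k_v=1$, the point $x^k=\sum_{v\in V^k}\alpha^k_v v$, and a vector $c^k\in\partial f(x^k)\cap(-\mathcal{N}_{\operatorname{conv}(V^k)}(x^k))$ (so $x^k$ minimizes $f$ over $\operatorname{conv}(V^k)$); then compute a minimizer $\hat x^k$ of $\min_{x\in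 X}(c^k)^\top x$. If $(c^k)^\top\hat x^k\ge (c^k)^\top x^k$, stop and output $x^k$; otherwise set $V^{k+1}:=\{v\in V^k:\alpha^k_v>0\}\cup\{\hat x^k\}$ and continue. *)

From HB Require Import structures.
From mathcomp Require Import all_boot all_order all_algebra.
From mathcomp Require Import all_classical all_reals all_analysis.
Set Implicit Arguments.
Unset Strict Implicit.
Unset Printing Implicit Defensive.
Import Order.TTheory GRing.Theory Num.Theory.
Import numFieldNormedType.Exports.
Local Open Scope ring_scope.
Local Open Scope classical_set_scope.

Section SDDROP.
Variables (R : realType) (n : nat).

Definition dotp (u v : 'rV[R]_n) : R := (u *m v^T) 0 0.
Definition enorm (u : 'rV[R]_n) : R := Num.sqrt (dotp u u).

Definition binary_vec (x : 'rV[R]_n) : Prop := forall i, x 0 i = 0 \/ x 0 i = 1.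

(* f(x) = max_{(c0,c) in U} c^T x + c0  (a max when U is compact nonempty) *)
Definition fmax (U : set (R * 'rV[R]_n)) (x : 'rV[R]_n) : R :=
  sup [set dotp u.2 x + u.1 | u in U].

Definition subdiff (f : 'rV[R]_n -> R) (x : 'rV[R]_n) : set 'rV[R]_n :=
  [set g | forall y, f x + dotp g (y - x) <= f y].

Definition normal_cone (C : set 'rV[R]_n) (x : 'rV[R]_n) : set 'rV[R]_n :=
  [set d | forall y, C y -> dotp d (y - x) <= 0].

Definition conv_hull (V : seq 'rV[R]_n) : set 'rV[R]_n :=
  [set x | exists a : 'rV[R]_n -> R, (forall v, v \in V -> 0 <= a v) /\
      \sum_(v <- V) a v = 1 /\ x = \sum_(v <- V) a v *: v].

Definition aff_hull (V : seq 'rV[R]_n) : set 'rV[R]_n :=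
  [set x | exists a : 'rV[R]_n -> R,
      \sum_(v <- V) a v = 1 /\ x = \sum_(v <- V) a v *: v].

Definition affine_set (A : set 'rV[R]_n) : Prop :=
  A !=set0 /\ forall x y (t : R), A x -> A y -> A ((1 - t) *: x + t *: y).

Definition direction (A : set 'rV[R]_n) : set 'rV[R]_n :=
  [set d | exists x y, A x /\ A y /\ d = y - x].

(* dim A >= m : the parallel subspace contains m linearly independent vectors *)
Definition affdim_ge (A : set 'rV[R]_n) (m : nat) : Prop :=
  exists M : 'M[R]_(m, n), row_free M /\ forall i, direction A (row i M).

Definition restr_differentiable_at (f : 'rV[R]_n -> R) (L : set 'rV[R]_n)
    (x : 'rV[R]_n) : Prop :=
  exists g : 'rV[R]_n, forall eps : R, 0 < eps ->
    exists2 delta : R, 0 < delta &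
      forall y, L y -> enorm (y - x) < delta ->
        `|f y - f x - dotp g (y - x)| <= eps * enorm (y - x).

End SDDROP.

(* Since -c^k is normal to conv(V^k) at x^k, every vertex with positive weight
   lies on the hyperplane c^k.y = c^k.x^k, whereas the new vertex xhat^k lies
   strictly below it.  So for a direction d of L /\ aff(V^{k+1}), signed so that
   c^k.d < 0, the affine weights of d give xhat^k a positive coefficient, and
   x^k + t d stays in conv(V^{k+1}) for small t > 0.  Along L the derivative of
   f in direction d is at most c^k.d < 0 (the subgradient inequality at x^k - t d),
   so f(x^k + t d) < f(x^k) for some such t; finally x^{k+1} minimizes f over
   conv(V^{k+1}) because -c^{k+1} is normal to it there. *)

From HB Require Import structures.
From mathcomp Require Import all_boot all_order all_algebra.
From mathcomp Require Import all_classical all_reals all_analysis.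
From mathcomp Require Import ring lra.
Import Order.TTheory GRing.Theory Num.Theory.
Import numFieldNormedType.Exports.
Local Open Scope ring_scope.
Local Open Scope classical_set_scope.

Set Implicit Arguments.
Unset Strict Implicit.

Section SDDropDescent.
Variables (R : realType) (n : nat).
Implicit Types (u v w x y z c d g : 'rV[R]_n) (V : seq 'rV[R]_n).

Lemma dotpDr u v w : dotp u (v + w) = dotp u v + dotp u w.
Proof. by rewrite /dotp linearD mulmxDr mxE. Qed.

Lemma dotpNr u v : dotp u (- v) = - dotp u v.
Proof. by rewrite /dotp linearN mulmxN mxE. Qed.

Lemma dotpNl u v : dotp (- u) v = - dotp u v.
Proof. by rewrite /dotp mulNmx mxE. Qed.

Lemma dotpBr u v w : dotp u (v - w) = dotp u v - dotp u w.
Proof. by rewrite dotpDr dotpNr. Qed.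

Lemma dotpZr u k v : dotp u (k *: v) = k * dotp u v.
Proof. by rewrite /dotp linearZ -scalemxAr mxE. Qed.

Lemma dotpZl u k v : dotp (k *: u) v = k * dotp u v.
Proof. by rewrite /dotp -scalemxAl mxE. Qed.

Lemma dotp0r u : dotp u 0 = 0.
Proof. by rewrite /dotp linear0 mulmx0 mxE. Qed.

Lemma dotp_sumr (T : Type) u (s : seq T) (F : T -> 'rV[R]_n) :
  dotp u (\sum_(i <- s) F i) = \sum_(i <- s) dotp u (F i).
Proof. exact: (big_morph _ (dotpDr u) (dotp0r u)). Qed.

Lemma enormZ k u : enorm (k *: u) = `|k| * enorm u.
Proof.
by rewrite /enorm dotpZl dotpZr mulrA -expr2 sqrtrM ?sqr_ge0 // sqrtr_sqr.
Qed.

Lemma enorm_ge0 u : 0 <= enorm u.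
Proof. exact: sqrtr_ge0. Qed.

Lemma mem_conv_hull V v : uniq V -> v \in V -> conv_hull V v.
Proof.
move=> uV Vv; have V1 : [seq w <- V | w == v] = [:: v] by exact: filter_pred1_uniq.
exists (fun w => if w == v then 1 else 0); split; first by move=> w _; case: ifP.
split; first by rewrite -big_mkcond -big_filter V1 big_seq1.
under eq_bigr => w _ do rewrite (fun_if (fun a => a *: w)) scale1r scale0r.
by rewrite -big_mkcond -big_filter V1 big_seq1.
Qed.

Lemma directionN (A : set 'rV[R]_n) d : direction A d -> direction A (- d).
Proof. by case=> x [y [Ax [Ay ->]]]; exists y, x; rewrite opprB. Qed.

Lemma direction_subset (A B : set 'rV[R]_n) d :
  A `<=` B -> direction A d -> direction B d.
Proof. by move=> AB [x [y [Ax [Ay ->]]]]; exists x, y; split; [|split]; auto. Qed.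

Lemma affine_set_shift (L : set 'rV[R]_n) z d t :
  affine_set L -> L z -> direction L d -> L (z + t *: d).
Proof.
case=> _ Laff Lz [x [y [Lx [Ly ->]]]].
have Lm := Laff z _ (1 / 2) Lz (Laff x y t Lx Ly).
by have := Laff x _ 2 Lx Lm; congr L; apply/rowP => j; rewrite !mxE; field.
Qed.

Lemma direction_aff_hull V d : direction (aff_hull V) d ->
  exists e : 'rV[R]_n -> R, \sum_(v <- V) e v = 0 /\ d = \sum_(v <- V) e v *: v.
Proof.
case=> _ [_ [[a [a1 ->]] [[b [b1 ->]] ->]]].
exists (fun v => b v - a v); split; first by rewrite sumrB a1 b1 subrr.
by rewrite -sumrB; apply: eq_bigr => v _; rewrite scalerBl.
Qed.

Lemma dotp_comb_sub V (e : 'rV[R]_n -> R) c x :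
  dotp c (\sum_(v <- V) e v *: v - (\sum_(v <- V) e v) *: x)
  = \sum_(v <- V) e v * dotp c (v - x).
Proof.
under [RHS]eq_bigr => v _ do rewrite dotpBr mulrBr.
rewrite sumrB -mulr_suml dotpBr dotpZr dotp_sumr.
by under eq_bigr => v _ do rewrite dotpZr.
Qed.

Lemma subdiff_normal_cone_min (f : 'rV[R]_n -> R) (C : set 'rV[R]_n) x c :
  subdiff f x c -> normal_cone C x (- c) -> forall y, C y -> f x <= f y.
Proof.
move=> hc hN y Cy; have := hc y; have := hN y Cy.
rewrite dotpNl; lra.
Qed.

Lemma normal_cone_conv_active V (a : 'rV[R]_n -> R) x c :
  uniq V -> (forall v, v \in V -> 0 <= a v) -> \sum_(v <- V) a v = 1 ->
  x = \sum_(v <- V) a v *: v -> normal_cone (conv_hull V) x (- c) ->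
  forall v, v \in V -> 0 < a v -> dotp c (v - x) = 0.
Proof.
move=> uV a0 a1 xE hN.
have c_ge0 v : v \in V -> 0 <= dotp c (v - x).
  by move=> Vv; have := hN v (mem_conv_hull uV Vv); rewrite dotpNl oppr_le0.
have : \sum_(v <- V | v \in V) a v * dotp c (v - x) == 0.
  by rewrite -big_seq -dotp_comb_sub a1 scale1r -xE subrr dotp0r.
rewrite psumr_eq0 => [/allP sum0 v Vv av0|v Vv]; last by rewrite mulr_ge0 ?a0 ?c_ge0.
by move: (sum0 v Vv); rewrite Vv mulf_eq0 gt_eqF //= => /eqP.
Qed.

Lemma small_step_ge0 (p q : R) : 0 <= p -> (p = 0 -> 0 <= q) ->
  exists2 t0, 0 < t0 & forall t, 0 <= t <= t0 -> 0 <= p + t * q.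
Proof.
rewrite le0r => /orP[/eqP -> /(_ erefl) q0|p0 _].
  by exists 1 => // t /andP[t0 _]; rewrite add0r mulr_ge0.
have q1 : 0 < `|q| + 1 by rewrite ltr_wpDl.
exists (p / (`|q| + 1)) => [|t /andP[t0 tle]]; first by rewrite divr_gt0.
have tq : t * `|q| <= p.
  apply: le_trans (_ : t * (`|q| + 1) <= p); first by rewrite ler_wpM2l ?lerDl.
  by rewrite -ler_pdivlMr.
have : - (t * `|q|) <= t * q by rewrite -mulrN ler_wpM2l // lerNl ler_normr lexx orbT.
lra.
Qed.

Lemma small_step_ge0_seq (T : eqType) (s : seq T) (p q : T -> R) :
  (forall i, i \in s -> 0 <= p i) -> (forall i, i \in s -> p i = 0 -> 0 <= q i) ->
  exists2 t0, 0 < t0 & forall t, 0 <= t <= t0 -> forall i, i \in s -> 0 <= p i + t * q i.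
Proof.
elim: s => [|j s IH] p0 q0; first by exists 1.
have js i : i \in s -> i \in j :: s by move=> si; rewrite in_cons si orbT.
have [t1 t10 ht1] := IH (fun i si => p0 i (js i si)) (fun i si => q0 i (js i si)).
have [t2 t20 ht2] := small_step_ge0 (p0 j (mem_head j s)) (q0 j (mem_head j s)).
exists (Num.min t1 t2) => [|t /andP[t0 tle] i]; first by rewrite lt_min t10 t20.
rewrite in_cons => /orP[/eqP -> | si].
  by apply: ht2; rewrite t0 (le_trans tle) ?ge_min ?lexx ?orbT.
by apply: ht1 => //; rewrite t0 (le_trans tle) ?ge_min ?lexx.
Qed.

Lemma conv_hull_perturb V (a e : 'rV[R]_n -> R) x d :
  (forall v, v \in V -> 0 <= a v) -> (forall v, v \in V -> a v = 0 -> 0 <= e v) ->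
  \sum_(v <- V) a v = 1 -> x = \sum_(v <- V) a v *: v ->
  \sum_(v <- V) e v = 0 -> d = \sum_(v <- V) e v *: v ->
  exists2 t0, 0 < t0 & forall t, 0 <= t <= t0 -> conv_hull V (x + t *: d).
Proof.
move=> a0 e0 a1 -> e1 ->; have [t0 t00 ht0] := small_step_ge0_seq a0 e0.
exists t0 => // t tt0; exists (fun v => a v + t * e v); split; first exact: ht0.
split; first by rewrite big_split /= -mulr_sumr a1 e1 mulr0 addr0.
rewrite scaler_sumr -big_split /=.
by apply: eq_bigr => v _; rewrite scalerDl scalerA.
Qed.

Lemma sum_rcons_filter_pos (M : nmodType) V (a : 'rV[R]_n -> R) w
    (G : R -> 'rV[R]_n -> M) :
  (forall v, G 0 v = 0) -> (forall v, v \in V -> 0 <= a v) ->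
  w \notin [seq v <- V | 0 < a v] ->
  \sum_(v <- rcons [seq v <- V | 0 < a v] w)
     G (if v \in [seq v <- V | 0 < a v] then a v else 0) v
  = \sum_(v <- V) G (a v) v.
Proof.
move=> G0 a0 wP; rewrite big_rcons /= (negbTE wP) G0 addr0.
rewrite (eq_big_seq (fun v => G (a v) v)) => [|v -> //].
rewrite big_filter big_rmcond_in // => v /a0.
by rewrite le0r => /orP[/eqP -> _ | ->].
Qed.

Lemma conv_hull_rcons_filter_perturb V (a e : 'rV[R]_n -> R) x w d :
  let P := [seq v <- V | 0 < a v] in
  (forall v, v \in V -> 0 <= a v) -> \sum_(v <- V) a v = 1 ->
  x = \sum_(v <- V) a v *: v -> w \notin P -> 0 <= e w ->
  \sum_(v <- rcons P w) e v = 0 -> d = \sum_(v <- rcons P w) e v *: v ->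
  exists2 t0, 0 < t0 & forall t, 0 <= t <= t0 -> conv_hull (rcons P w) (x + t *: d).
Proof.
move=> P a0 a1 xE wP ew e0 de.
apply: (@conv_hull_perturb _ (fun v => if v \in P then a v else 0) e) => //.
- by move=> v _; case: ifP => // /[!mem_filter] /andP[/ltW].
- move=> v; rewrite mem_rcons in_cons => /orP[/eqP -> //|vP].
  by rewrite vP; move: vP; rewrite mem_filter => /andP[/gt_eqF/eqP].
- by rewrite (sum_rcons_filter_pos (G := fun r _ => r)).
- by rewrite xE (sum_rcons_filter_pos (G := fun r v => r *: v)) // => v; rewrite scale0r.
Qed.

(* [restr_differentiable_at f L x] unfolds to [exists g, restr_gradient f L x g]. *)
Definition restr_gradient (f : 'rV[R]_n -> R) (L : set 'rV[R]_n) x g :=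
  forall eps : R, 0 < eps ->
    exists2 delta : R, 0 < delta &
      forall y, L y -> enorm (y - x) < delta ->
        `|f y - f x - dotp g (y - x)| <= eps * enorm (y - x).

Section RestrictedGradient.
Variables (f : 'rV[R]_n -> R) (L : set 'rV[R]_n) (x g d : 'rV[R]_n).
Hypotheses (hg : restr_gradient f L x g) (Ld : forall t, L (x + t *: d)).

Lemma restr_gradient_step eps t0 : 0 < eps -> 0 < t0 ->
  exists2 tau, 0 < tau <= t0 & forall s, `|s| = tau ->
    `|f (x + s *: d) - f x - s * dotp g d| <= eps * (tau * enorm d).
Proof.
move=> eps0 t00; have [del del0 hdel] := hg eps0.
have N1 : 0 < enorm d + 1 by rewrite ltr_wpDl ?enorm_ge0.
set tau := Num.min t0 (del / (enorm d + 1)).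
have tau0 : 0 < tau by rewrite lt_min t00 divr_gt0.
have tau_del : tau * enorm d < del.
  apply: lt_le_trans (_ : tau * (enorm d + 1) <= del); first by rewrite ltr_pM2l ?ltrDl.
  by rewrite -ler_pdivlMr // ge_min lexx orbT.
exists tau => [|s hs]; first by rewrite tau0 ge_min lexx.
have := hdel _ (Ld s); rewrite addrC addKr enormZ hs dotpZr; exact.
Qed.

Lemma restr_gradient_le_subdiff c : subdiff f x c -> dotp g d <= dotp c d.
Proof.
move=> hc; apply/ler_addgt0Pr => e e0.
have N1 : 0 < enorm d + 1 by rewrite ltr_wpDl ?enorm_ge0.
set k := e / (enorm d + 1).
have kN : k * enorm d <= e.
  by rewrite /k mulrAC ler_pdivrMr // ler_pM2l ?lerDl.
have [tau /andP[tau0 _] htau] := restr_gradient_step (divr_gt0 e0 N1) ltr01.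
have := htau (- tau); rewrite normrN gtr0_norm // => /(_ erefl).
rewrite -/k ler_norml => /andP[_ hup].
have := hc (x + (- tau) *: d); rewrite [X in dotp _ X]addrC addKr dotpZr => hsub.
nra.
Qed.

Lemma restr_gradient_descent c t0 : subdiff f x c -> dotp c d < 0 -> 0 < t0 ->
  exists2 tau, 0 < tau <= t0 & f (x + tau *: d) < f x.
Proof.
move=> hc cd0 t00; have gc := restr_gradient_le_subdiff hc.
have N1 : 0 < enorm d + 1 by rewrite ltr_wpDl ?enorm_ge0.
set eps := - dotp c d / (enorm d + 1).
have eps0 : 0 < eps by rewrite divr_gt0 ?oppr_gt0.
have epsN : eps * enorm d < - dotp c d.
  by rewrite /eps mulrAC ltr_pdivrMr // ltr_pM2l ?ltrDl ?oppr_gt0.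
have [tau tau0t0 htau] := restr_gradient_step eps0 t00.
exists tau => //; have /andP[tau0 _] := tau0t0.
have := htau tau (gtr0_norm tau0); rewrite ler_norml => /andP[_ hup].
nra.
Qed.

End RestrictedGradient.

End SDDropDescent.

Theorem lemma3 (R : realType) (n : nat)
  (X : set 'rV[R]_n) (U : set (R * 'rV[R]_n))
  (hX0 : X !=set0) (hXbin : forall x, X x -> binary_vec x)
  (hU0 : U !=set0) (hUc : compact U)
  (* state at iteration k *)
  (Vk : seq 'rV[R]_n) (hVk : uniq Vk) (hVkX : forall v, v \in Vk -> X v)
  (ak : 'rV[R]_n -> R) (hak0 : forall v, v \in Vk -> 0 <= ak v)
  (hak1 : \sum_(v <- Vk) ak v = 1)
  (xk : 'rV[R]_n) (hxk : xk = \sum_(v <- Vk) ak v *: v)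
  (ck : 'rV[R]_n) (hck : subdiff (fmax U) xk ck)
  (hckN : normal_cone (conv_hull Vk) xk (- ck))
  (xhk : 'rV[R]_n) (hxhk : X xhk)
  (hxhk_min : forall x, X x -> dotp ck xhk <= dotp ck x)
  (* no termination *)
  (hnostop : dotp ck xhk < dotp ck xk)
  (* V^{k+1} = {v in V^k : alpha_v > 0} u {xhat^k} *)
  (Vk1 : seq 'rV[R]_n)
  (hVk1 : Vk1 = undup (rcons [seq v <- Vk | 0 < ak v] xhk))
  (* iteration k+1: alpha^{k+1}, x^{k+1}, c^{k+1} *)
  (ak1 : 'rV[R]_n -> R) (hak10 : forall v, v \in Vk1 -> 0 <= ak1 v)
  (hak11 : \sum_(v <- Vk1) ak1 v = 1)
  (xk1 : 'rV[R]_n) (hxk1 : xk1 = \sum_(v <- Vk1) ak1 v *: v)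
  (ck1 : 'rV[R]_n) (hck1 : subdiff (fmax U) xk1 ck1)
  (hck1N : normal_cone (conv_hull Vk1) xk1 (- ck1))
  (* the affine subspace L *)
  (L : set 'rV[R]_n) (hL : affine_set L) (hLx : L xk)
  (hdiff : restr_differentiable_at (fmax U) L xk)
  (hdim : affdim_ge (L `&` aff_hull Vk1) 1)
  (horth : exists d, direction (L `&` aff_hull Vk1) d /\ dotp ck d != 0) :
  fmax U xk1 < fmax U xk.
Proof.
set Vp := [seq v <- Vk | 0 < ak v].
have active v : v \in Vp -> dotp ck (v - xk) = 0.
  by rewrite mem_filter => /andP[av Vv]; exact: normal_cone_conv_active hckN v Vv av.
have xhk_below : dotp ck (xhk - xk) < 0 by rewrite dotpBr subr_lt0.
have xhk_new : xhk \notin Vp.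
  by apply/negP => /active c0; rewrite c0 ltxx in xhk_below.
have eV : Vk1 = rcons Vp xhk.
  by rewrite hVk1 undup_id // rcons_uniq xhk_new filter_uniq.
have [d [ddir cd0]] : exists d, direction (L `&` aff_hull Vk1) d /\ dotp ck d < 0.
  case: horth => d [ddir]; rewrite neq_lt => /orP[cd0|cd0]; first by exists d.
  by exists (- d); split; [exact: directionN | rewrite dotpNr oppr_lt0].
have Ld t : L (xk + t *: d).
  by apply: affine_set_shift => //; apply: direction_subset ddir; exact: subIsetl.
have [e [e0 de]] := direction_aff_hull (direction_subset (@subIsetr _ L _) ddir).
have e_xhk : 0 < e xhk.
  have : dotp ck d = e xhk * dotp ck (xhk - xk).
    rewrite -[d]subr0 -(scale0r xk) -e0 de dotp_comb_sub eV big_rcons /=.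
    by rewrite big_seq big1 ?add0r // => v /active ->; rewrite mulr0.
  nra.
rewrite eV in e0 de hck1N.
have [t0 t00 ht0] :=
  conv_hull_rcons_filter_perturb hak0 hak1 hxk xhk_new (ltW e_xhk) e0 de.
have [g hg] := hdiff.
have [tau /andP[tau0 taut0] desc] := restr_gradient_descent hg Ld hck cd0 t00.
apply: le_lt_trans desc.
by apply: subdiff_normal_cone_min hck1 hck1N _ (ht0 _ _); rewrite ltW.
Qed.
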